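(* Let $P$ be the unit-volume right prism over an equilateral triangle that is circumscribed about a sphere (i.e. all five faces are tangent to a common sphere), and let $Q$ be any unit-volume quadrilateral pyramid. Then the surface area of $P$ is strictly less than the surface area of $Q$.
   Context: A right prism over a triangle has two parallel congruent triangular faces related by a translation perpendicular to their planes, and three rectangular side faces. *)

From HB Require Import structures.
From mathcomp Require Import all_boot all_order all_algebra.
Set Implicit Arguments. Unset Strict Implicit. Unset Printing Implicit Defensive.
Import Order.TTheory GRing.Theory Num.Theory.
Local Open Scope ring_scope.

Section Geom.
Variable R : rcfType.

Definition vec := (R * R * R)%type.

Definition vx (u : vec) : R := u.1.1.
Definition vy (u : vec) : R := u.1.2.
Definition vz (u : vec) : R := u.2.

Definition vadd (u v : vec) : vec := (vx u + vx v, vy u + vy v, vz u + vz v).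
Definition vsub (u v : vec) : vec := (vx u - vx v, vy u - vy v, vz u - vz v).
Definition vscale (a : R) (u : vec) : vec := (a * vx u, a * vy u, a * vz u).
Definition vzero : vec := (0, 0, 0).
Definition dot (u v : vec) : R := vx u * vx v + vy u * vy v + vz u * vz v.
Definition cross (u v : vec) : vec :=
  (vy u * vz v - vz u * vy v, vz u * vx v - vx u * vz v, vx u * vy v - vy u * vx v).
Definition vnorm (u : vec) : R := Num.sqrt (dot u u).

Definition tri_area (X Y Z : vec) : R := vnorm (cross (vsub Y X) (vsub Z X)) / 2.
Definition par_area (u v : vec) : R := vnorm (cross u v).
Definition tet_vol (X Y Z W : vec) : R :=
  `|dot (cross (vsub Y X) (vsub Z X)) (vsub W X)| / 6.

(* vertices A B C (bottom face) and A+t, B+t, C+t (top face); t is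
   perpendicular to the plane of the non-degenerate triangle ABC. *)
Definition is_right_prism (A B C t : vec) : Prop :=
  [/\ cross (vsub B A) (vsub C A) <> vzero, t <> vzero,
      dot t (vsub B A) = 0 & dot t (vsub C A) = 0].

Definition equilateral (A B C : vec) : Prop :=
  vnorm (vsub B A) = vnorm (vsub C B) /\ vnorm (vsub C B) = vnorm (vsub A C).

(* The triangular face XYZ is tangent to the sphere S(c, r): the sphere
   touches the plane of the face at a point p of the (closed) face,
   i.e. |p - c| = r and p - c is normal to the face. *)
Definition tri_face_tangent (X Y Z c : vec) (r : R) : Prop :=
  exists a b g : R, [/\ 0 <= a, 0 <= b, 0 <= g, a + b + g = 1 &
    let p := vadd (vscale a X) (vadd (vscale b Y) (vscale g Z)) in
    [/\ vnorm (vsub p c) = r, dot (vsub p c) (vsub Y X) = 0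
      & dot (vsub p c) (vsub Z X) = 0]].

Definition par_face_tangent (X u v c : vec) (r : R) : Prop :=
  exists s w : R, [/\ 0 <= s <= 1, 0 <= w <= 1 &
    let p := vadd X (vadd (vscale s u) (vscale w v)) in
    [/\ vnorm (vsub p c) = r, dot (vsub p c) u = 0 & dot (vsub p c) v = 0]].

Definition prism_circumscribed (A B C t : vec) : Prop :=
  exists (c : vec) (r : R), 0 < r /\
    [/\ tri_face_tangent A B C c r,
        tri_face_tangent (vadd A t) (vadd B t) (vadd C t) c r,
        par_face_tangent A (vsub B A) t c r,
        par_face_tangent B (vsub C B) t c r &
        par_face_tangent C (vsub A C) t c r].

Definition prism_volume (A B C t : vec) : R := tri_area A B C * vnorm t.

Definition prism_surface (A B C t : vec) : R :=
  tri_area A B C + tri_area (vadd A t) (vadd B t) (vadd C t)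
  + par_area (vsub B A) t + par_area (vsub C B) t + par_area (vsub A C) t.

(* The base is a (strictly) convex planar quadrilateral with vertices in
   cyclic order Q1 Q2 Q3 Q4: the four points are coplanar and every
   consecutive turn has the same orientation with respect to the normal n;
   the apex E does not lie in the plane of the base. *)
Definition is_quad_pyramid (Q1 Q2 Q3 Q4 E : vec) : Prop :=
  let n := cross (vsub Q2 Q1) (vsub Q3 Q2) in
  [/\ n <> vzero,
      dot n (vsub Q4 Q1) = 0,
      dot n (vsub E Q1) <> 0 &
      [/\
      0 < dot n (cross (vsub Q3 Q2) (vsub Q4 Q3)),
      0 < dot n (cross (vsub Q4 Q3) (vsub Q1 Q4)) &
      0 < dot n (cross (vsub Q1 Q4) (vsub Q2 Q1))]].

Definition pyramid_volume (Q1 Q2 Q3 Q4 E : vec) : R :=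
  tet_vol Q1 Q2 Q3 E + tet_vol Q1 Q3 Q4 E.

(* base area (convex quadrilateral split along the diagonal Q1Q3) plus the
   four lateral triangles *)
Definition pyramid_surface (Q1 Q2 Q3 Q4 E : vec) : R :=
  (tri_area Q1 Q2 Q3 + tri_area Q1 Q3 Q4)
  + tri_area E Q1 Q2 + tri_area E Q2 Q3 + tri_area E Q3 Q4 + tri_area E Q4 Q1.

End Geom.

(* Pyramid: with base area B, height h, base perimeter P and lateral area L, the
   projections of the lateral faces onto the base add up to the base, so Minkowski's
   inequality gives (2 L)^2 >= (2 B)^2 + (P h)^2; a convex quadrilateral has
   P^2 >= 16 B, and B h = 3, whence L^2 >= B^2 + 36 / B and (B + L)^3 >= 288.
   Prism: tangency of both bases puts the centre of the sphere halfway between them,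
   above a point of the base at distance r = h / 2 from all three sides, i.e. the
   incentre; so h^2 = a^2 / 3 for the side a, a^3 = 4, and the surface S satisfies
   S^6 = 4 * 27^3 < 288^2. *)

From mathcomp Require Import all_boot all_order all_algebra.
From mathcomp Require Import ring lra.
Import Order.TTheory GRing.Theory Num.Theory.
Local Open Scope ring_scope.

Ltac vec_unfold := rewrite /dot /cross /vsub /vadd /vscale /vx /vy /vz /vzero /=.
Ltac vec_ring := vec_unfold; congr (_, _, _); ring.

Section VectorAlgebra.
Context {R : rcfType}.
Implicit Types (a b c d n u v y z : vec R) (p q : R).

Lemma dotC u v : dot u v = dot v u.
Proof. vec_unfold; ring. Qed.

Lemma dot_ge0 u : 0 <= dot u u.
Proof. vec_unfold; nra. Qed.

Lemma dot_eq0 u : dot u u = 0 -> u = vzero R.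
Proof.
case: u => [[u1 u2] u3]; vec_unfold => h.
by congr (_, _, _); apply/eqP; rewrite -sqrf_eq0 eq_le sqr_ge0 andbT; nra.
Qed.

Lemma dot_gt0 {u} : u <> vzero R -> 0 < dot u u.
Proof. by move=> u0; rewrite lt_def dot_ge0 andbT; apply/eqP=> /dot_eq0. Qed.

Lemma vnorm_ge0 u : 0 <= vnorm u.
Proof. exact: sqrtr_ge0. Qed.

Lemma sqr_vnorm u : vnorm u ^+ 2 = dot u u.
Proof. by rewrite sqr_sqrtr ?dot_ge0. Qed.

Lemma dot_cross_cross a b c d :
  dot (cross a b) (cross c d) = dot a c * dot b d - dot a d * dot b c.
Proof. vec_unfold; ring. Qed.

Lemma cross_crossl u v y :
  cross (cross u v) y = vsub (vscale (dot u y) v) (vscale (dot v y) u).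
Proof. vec_ring. Qed.

Lemma cross_perp {u v y} : dot u y = 0 -> dot v y = 0 -> cross (cross u v) y = vzero R.
Proof. by move=> uy vy; rewrite cross_crossl uy vy; vec_ring. Qed.

Lemma dot_parallel {y z} c : cross y z = vzero R -> dot y y * dot z c = dot y z * dot y c.
Proof.
move=> yz; have := dot_cross_cross y z y c.
have -> : dot (cross y z) (cross y c) = 0 by rewrite yz; vec_unfold; ring.
rewrite (dotC z y); lra.
Qed.

Lemma ler_of_sqr p q : 0 <= q -> p ^+ 2 <= q ^+ 2 -> p <= q.
Proof. by move=> q0 pq; nra. Qed.

Lemma dot_le_vnorm u v : dot u v <= vnorm u * vnorm v.
Proof.
apply: ler_of_sqr; first by rewrite mulr_ge0 ?vnorm_ge0.
rewrite exprMn !sqr_vnorm.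
have := dot_ge0 (cross u v); rewrite dot_cross_cross (dotC v u) -expr2; lra.
Qed.

Lemma vnorm_cross_le u v : vnorm (cross u v) <= vnorm u * vnorm v.
Proof.
apply: ler_of_sqr; first by rewrite mulr_ge0 ?vnorm_ge0.
rewrite exprMn !sqr_vnorm dot_cross_cross (dotC v u); nra.
Qed.

Lemma dot_cross_le n u v : dot n (cross u v) <= vnorm n * (vnorm u * vnorm v).
Proof.
apply: le_trans (dot_le_vnorm _ _) _.
by rewrite ler_wpM2l ?vnorm_ge0 ?vnorm_cross_le.
Qed.

Lemma vsub_eq0 y z : vsub y z = vzero R -> y = z.
Proof.
case: y z => [[y1 y2] y3] [[z1 z2] z3]; vec_unfold => -[e1 e2 e3].
by congr (_, _, _); apply/eqP; rewrite -subr_eq0; apply/eqP.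
Qed.

Lemma vsub_translate y z t : vsub (vadd y t) (vadd z t) = vsub y z.
Proof. vec_ring. Qed.

Lemma cross_crossr y u v :
  cross y (cross u v) = vsub (vscale (dot y v) u) (vscale (dot y u) v).
Proof. vec_ring. Qed.

(* For a triangle [E X Y] whose edge [X Y] lies in a plane with normal [n]: twice its
   area, scaled by [|n|], splits orthogonally into its projection onto the plane and
   edge length times height of [E] above the plane. *)
Lemma vnorm_cross_apex {n O X Y} E :
  dot n (vsub X O) = 0 -> dot n (vsub Y O) = 0 ->
  (vnorm n * vnorm (cross (vsub X E) (vsub Y E))) ^+ 2 =
  dot n (cross (vsub X E) (vsub Y E)) ^+ 2 + (vnorm (vsub Y X) * `|dot n (vsub E O)|) ^+ 2.
Proof.
move=> nX nY; set k := dot n (vsub E O).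
have nXE : dot n (vsub X E) = - k by rewrite -[LHS]subr0 -nX /k; vec_unfold; ring.
have nYE : dot n (vsub Y E) = - k by rewrite -[LHS]subr0 -nY /k; vec_unfold; ring.
have lagrange := dot_cross_cross n (cross (vsub X E) (vsub Y E)) n (cross (vsub X E) (vsub Y E)).
rewrite cross_crossr nXE nYE (dotC (cross _ _) n) in lagrange.
have edge : dot (vsub (vscale (- k) (vsub X E)) (vscale (- k) (vsub Y E)))
                (vsub (vscale (- k) (vsub X E)) (vscale (- k) (vsub Y E)))
            = k ^+ 2 * dot (vsub Y X) (vsub Y X) by vec_unfold; ring.
rewrite edge in lagrange.
rewrite !exprMn !sqr_vnorm real_normK ?num_real //; lra.
Qed.

Lemma tri_area_ge0 (X Y Z : vec R) : 0 <= tri_area X Y Z.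
Proof. by rewrite divr_ge0 ?vnorm_ge0. Qed.

Lemma dot_cross_cone n Q1 Q2 Q3 Q4 E :
  dot n (cross (vsub Q1 E) (vsub Q2 E)) + dot n (cross (vsub Q2 E) (vsub Q3 E))
  + dot n (cross (vsub Q3 E) (vsub Q4 E)) + dot n (cross (vsub Q4 E) (vsub Q1 E))
  = dot n (cross (vsub Q2 Q1) (vsub Q3 Q1)) + dot n (cross (vsub Q3 Q1) (vsub Q4 Q1)).
Proof. vec_unfold; ring. Qed.

End VectorAlgebra.

Section RealInequalities.
Context {R : rcfType}.
Implicit Types (a b y l B L h : R).

Lemma minkowski2 {a1 a2 b1 b2 y1 y2} : 0 <= y1 -> 0 <= y2 ->
  a1 ^+ 2 + b1 ^+ 2 <= y1 ^+ 2 -> a2 ^+ 2 + b2 ^+ 2 <= y2 ^+ 2 ->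
  (a1 + a2) ^+ 2 + (b1 + b2) ^+ 2 <= (y1 + y2) ^+ 2.
Proof.
move=> y1_ge0 y2_ge0 h1 h2.
suff : a1 * a2 + b1 * b2 <= y1 * y2 by nra.
have [neg|pos] := lerP (a1 * a2 + b1 * b2) 0; first by rewrite (le_trans neg) ?mulr_ge0.
apply: ler_of_sqr; first exact: mulr_ge0.
have lagrange : (a1 * a2 + b1 * b2) ^+ 2 + (a1 * b2 - a2 * b1) ^+ 2
                = (a1 ^+ 2 + b1 ^+ 2) * (a2 ^+ 2 + b2 ^+ 2) by ring.
have := sqr_ge0 (a1 * b2 - a2 * b1).
have : (a1 ^+ 2 + b1 ^+ 2) * (a2 ^+ 2 + b2 ^+ 2) <= y1 ^+ 2 * y2 ^+ 2.
  by rewrite ler_pM ?addr_ge0 ?sqr_ge0.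
rewrite exprMn; lra.
Qed.

Lemma minkowski4 {a1 a2 a3 a4 b1 b2 b3 b4 y1 y2 y3 y4} :
  0 <= y1 -> 0 <= y2 -> 0 <= y3 -> 0 <= y4 ->
  a1 ^+ 2 + b1 ^+ 2 <= y1 ^+ 2 -> a2 ^+ 2 + b2 ^+ 2 <= y2 ^+ 2 ->
  a3 ^+ 2 + b3 ^+ 2 <= y3 ^+ 2 -> a4 ^+ 2 + b4 ^+ 2 <= y4 ^+ 2 ->
  (a1 + a2 + a3 + a4) ^+ 2 + (b1 + b2 + b3 + b4) ^+ 2 <= (y1 + y2 + y3 + y4) ^+ 2.
Proof.
move=> y1_ge0 y2_ge0 y3_ge0 y4_ge0 h1 h2 h3 h4.
have h12 := minkowski2 y1_ge0 y2_ge0 h1 h2.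
have h123 := minkowski2 (addr_ge0 y1_ge0 y2_ge0) y3_ge0 h12 h3.
exact: minkowski2 (addr_ge0 (addr_ge0 y1_ge0 y2_ge0) y3_ge0) y4_ge0 h123 h4.
Qed.

Lemma quad_isoperimetric a l1 l2 l3 l4 :
  a <= l1 * l2 + l3 * l4 -> a <= l2 * l3 + l4 * l1 -> 8 * a <= (l1 + l2 + l3 + l4) ^+ 2.
Proof. by move=> h1 h2; have := sqr_ge0 (l1 + l3 - (l2 + l4)); nra. Qed.

(* For [k := B + L] the hypotheses give [36 <= k^2 B - 2 k B^2], which is at most
   [k^3 / 8] (equality at [B = k / 4]). *)
Lemma cube_ge_288 B L h : 0 < B -> 0 <= L -> B * h = 3 ->
  B ^+ 2 + 4 * B * h ^+ 2 <= L ^+ 2 -> 288 <= (B + L) ^+ 3.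
Proof.
move=> B_gt0 L_ge0 Bh hL.
have h36 : 4 * B * h ^+ 2 * B = 36.
  by transitivity (4 * (B * h) ^+ 2); [ring | rewrite Bh; ring].
have key : 36 <= (B + L) ^+ 2 * B - 2 * (B + L) * B ^+ 2.
  have := ler_wpM2r (ltW B_gt0) hL; nra.
have := mulr_ge0 (addr_ge0 (ltW B_gt0) L_ge0) (sqr_ge0 (B + L - 4 * B)); nra.
Qed.

Lemma equilateral_prism_cube_lt (T K tau x : R) : 0 <= T -> 0 <= K -> 0 <= tau ->
  T ^+ 2 = 3 / 16 * x ^+ 2 -> K ^+ 2 = x ^+ 2 / 3 -> tau ^+ 2 = x / 3 -> T * tau = 1 ->
  (T + T + K + K + K) ^+ 3 < 288.
Proof.
move=> T_ge0 K_ge0 tau_ge0 T2 K2 tau2 vol.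
have x3 : x ^+ 3 = 16.
  have : (T * tau) ^+ 2 = 1 by rewrite vol expr1n.
  rewrite exprMn T2 tau2 => e.
  by transitivity (16 * (3 / 16 * x ^+ 2 * (x / 3))); [field | rewrite e mulr1].
have TK : T * K = x ^+ 2 / 4.
  have x2_ge0 : 0 <= x ^+ 2 / 4 by rewrite divr_ge0 ?sqr_ge0.
  apply/eqP; rewrite -(eqrXn2 (isT : (0 < 2)%N) (mulr_ge0 T_ge0 K_ge0) x2_ge0).
  by apply/eqP; rewrite exprMn T2 K2; field.
set S := T + T + K + K + K.
have S2 : S ^+ 2 = 27 / 4 * x ^+ 2.
  transitivity (4 * T ^+ 2 + 12 * (T * K) + 9 * K ^+ 2); first by rewrite /S; ring.
  by rewrite T2 TK K2; field.
have S6 : (S ^+ 3) ^+ 2 = 4 * 27 ^+ 3.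
  transitivity ((S ^+ 2) ^+ 3); first by rewrite -!exprM.
  by transitivity ((27 / 4) ^+ 3 * (x ^+ 3) ^+ 2); [rewrite S2; ring | rewrite x3; field].
have S_ge0 : 0 <= S by rewrite /S !addr_ge0.
rewrite -ltr_sqr ?nnegrE ?exprn_ge0 // S6.
lra.
Qed.

End RealInequalities.

Section Pyramid.
Context {R : rcfType}.
Variables Q1 Q2 Q3 Q4 E : vec R.
Hypothesis pyr : is_quad_pyramid Q1 Q2 Q3 Q4 E.

Let N := cross (vsub Q2 Q1) (vsub Q3 Q1).
Let N' := cross (vsub Q3 Q1) (vsub Q4 Q1).

Definition pyramid_base_area := tri_area Q1 Q2 Q3 + tri_area Q1 Q3 Q4.
Definition pyramid_lateral_area :=
  tri_area E Q1 Q2 + tri_area E Q2 Q3 + tri_area E Q3 Q4 + tri_area E Q4 Q1.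
Definition pyramid_height := `|dot N (vsub E Q1)| / vnorm N.
Definition base_perimeter :=
  vnorm (vsub Q2 Q1) + vnorm (vsub Q3 Q2) + vnorm (vsub Q4 Q3) + vnorm (vsub Q1 Q4).

Lemma base_normalE : cross (vsub Q2 Q1) (vsub Q3 Q2) = N.
Proof. rewrite /N; vec_ring. Qed.

Lemma vnorm_base_normal_gt0 : 0 < vnorm N.
Proof. by rewrite sqrtr_gt0; case: pyr; rewrite base_normalE => /dot_gt0. Qed.

Lemma base_coplanar :
  [/\ dot N (vsub Q1 Q1) = 0, dot N (vsub Q2 Q1) = 0,
      dot N (vsub Q3 Q1) = 0 & dot N (vsub Q4 Q1) = 0].
Proof.
by case: pyr; rewrite base_normalE /N => _ coplanar _ _; split=> //; vec_unfold; ring.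
Qed.

Lemma base_normals_parallel : cross N N' = vzero R.
Proof.
apply: cross_perp; rewrite dotC.
  have -> : dot N' (vsub Q2 Q1) = dot N (vsub Q4 Q1) by rewrite /N /N'; vec_unfold; ring.
  by case: base_coplanar.
by rewrite /N'; vec_unfold; ring.
Qed.

Lemma base_normals_dot : dot N N' = vnorm N * vnorm N'.
Proof.
have N_N'_gt0 : 0 < dot N N'.
  case: pyr => _ _ _ [_ + _].
  by rewrite base_normalE (_ : cross (vsub Q4 Q3) (vsub Q1 Q4) = N') //; rewrite /N'; vec_ring.
apply/eqP; rewrite -(@eqrXn2 _ 2) ?mulr_ge0 ?vnorm_ge0 ?(ltW N_N'_gt0) //.
by rewrite exprMn !sqr_vnorm (dot_parallel N' base_normals_parallel) expr2 dotC.
Qed.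

Lemma pyramid_volumeE :
  pyramid_volume Q1 Q2 Q3 Q4 E = pyramid_base_area * pyramid_height / 3.
Proof.
have m_gt0 := vnorm_base_normal_gt0.
have m2_neq0 : vnorm N ^+ 2 != 0 by rewrite expf_neq0 ?gt_eqF.
have heights : dot N' (vsub E Q1) = vnorm N' * dot N (vsub E Q1) / vnorm N.
  have := dot_parallel (vsub E Q1) base_normals_parallel.
  rewrite -(sqr_vnorm N) base_normals_dot => e.
  by rewrite -[LHS](mulKf m2_neq0) e; field; rewrite gt_eqF.
rewrite /pyramid_volume /tet_vol /pyramid_base_area /tri_area /pyramid_height -/N -/N'.
rewrite heights !normrM normfV !(ger0_norm (vnorm_ge0 _)).
by field; rewrite gt_eqF.
Qed.

Lemma base_perimeter_sqr_ge : 16 * pyramid_base_area <= base_perimeter ^+ 2.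
Proof.
have m_gt0 := vnorm_base_normal_gt0.
have bound a b c d : dot N N + dot N N' = dot N (cross a b) + dot N (cross c d) ->
    vnorm N + vnorm N' <= vnorm a * vnorm b + vnorm c * vnorm d.
  move=> e; rewrite -(ler_pM2l m_gt0) mulrDr -expr2 sqr_vnorm -base_normals_dot e mulrDr.
  by apply: lerD; apply: dot_cross_le.
have -> : 16 * pyramid_base_area = 8 * (vnorm N + vnorm N').
  by rewrite /pyramid_base_area /tri_area -/N -/N'; field.
by apply: quad_isoperimetric; apply: bound; rewrite /N /N'; vec_unfold; ring.
Qed.

Lemma lateral_area_sqr_ge :
  (2 * pyramid_base_area) ^+ 2 + (base_perimeter * pyramid_height) ^+ 2
  <= (2 * pyramid_lateral_area) ^+ 2.
Proof.
have m_gt0 := vnorm_base_normal_gt0.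
have face X Y : dot N (vsub X Q1) = 0 -> dot N (vsub Y Q1) = 0 ->
    dot N (cross (vsub X E) (vsub Y E)) ^+ 2
    + (vnorm (vsub Y X) * (vnorm N * pyramid_height)) ^+ 2
    <= (vnorm N * vnorm (cross (vsub X E) (vsub Y E))) ^+ 2.
  have -> : vnorm N * pyramid_height = `|dot N (vsub E Q1)|.
    by rewrite /pyramid_height mulrC divfK ?gt_eqF.
  by move=> X0 Y0; rewrite (vnorm_cross_apex E X0 Y0).
have y_ge0 X Y : 0 <= vnorm N * vnorm (cross (vsub X E) (vsub Y E)).
  by rewrite mulr_ge0 ?vnorm_ge0.
case: base_coplanar => Q1_0 Q2_0 Q3_0 Q4_0.
have := minkowski4 (y_ge0 Q1 Q2) (y_ge0 Q2 Q3) (y_ge0 Q3 Q4) (y_ge0 Q4 Q1)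
  (face _ _ Q1_0 Q2_0) (face _ _ Q2_0 Q3_0) (face _ _ Q3_0 Q4_0) (face _ _ Q4_0 Q1_0).
rewrite dot_cross_cone -/N -/N' -(sqr_vnorm N) base_normals_dot => minkowski.
rewrite -(ler_pM2l (exprn_gt0 2 m_gt0)).
rewrite /pyramid_base_area /pyramid_lateral_area /base_perimeter /tri_area -/N -/N'.
set m := vnorm N; set m' := vnorm N'; set h := pyramid_height.
set l1 := vnorm (vsub Q2 Q1); set l2 := vnorm (vsub Q3 Q2).
set l3 := vnorm (vsub Q4 Q3); set l4 := vnorm (vsub Q1 Q4).
set x1 := vnorm (cross _ _); set x2 := vnorm (cross _ _).
set x3 := vnorm (cross _ _); set x4 := vnorm (cross _ _).
have -> : m ^+ 2 * ((2 * (m / 2 + m' / 2)) ^+ 2 + ((l1 + l2 + l3 + l4) * h) ^+ 2)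
  = (m ^+ 2 + m * m') ^+ 2 + (l1 * (m * h) + l2 * (m * h) + l3 * (m * h) + l4 * (m * h)) ^+ 2.
  by field.
have -> : m ^+ 2 * (2 * (x1 / 2 + x2 / 2 + x3 / 2 + x4 / 2)) ^+ 2
  = (m * x1 + m * x2 + m * x3 + m * x4) ^+ 2 by field.
exact: minkowski.
Qed.

Lemma pyramid_surface_cube_ge :
  pyramid_volume Q1 Q2 Q3 Q4 E = 1 -> 288 <= pyramid_surface Q1 Q2 Q3 Q4 E ^+ 3.
Proof.
rewrite pyramid_volumeE => vol.
have -> : pyramid_surface Q1 Q2 Q3 Q4 E = pyramid_base_area + pyramid_lateral_area.
  by rewrite /pyramid_surface /pyramid_lateral_area /pyramid_base_area !addrA.
have B_gt0 : 0 < pyramid_base_area.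
  rewrite /pyramid_base_area ltr_wpDr ?tri_area_ge0 // /tri_area -/N.
  by rewrite divr_gt0 ?vnorm_base_normal_gt0.
apply: (cube_ge_288 _ _ pyramid_height) => //.
- by rewrite /pyramid_lateral_area !addr_ge0 ?tri_area_ge0.
- by move: vol; lra.
have := ler_wpM2r (sqr_ge0 pyramid_height) base_perimeter_sqr_ge.
have := lateral_area_sqr_ge.
rewrite [(2 * pyramid_base_area) ^+ 2]exprMn [(base_perimeter * _) ^+ 2]exprMn.
rewrite [(2 * pyramid_lateral_area) ^+ 2]exprMn.
lra.
Qed.

End Pyramid.

Section PlaneNormals.
Context {R : rcfType}.
Implicit Types (u v d y z t : vec R) (a b : R).

Lemma span_perp_eq0 u v d a b :
  d = vadd (vscale a u) (vscale b v) -> dot d u = 0 -> dot d v = 0 -> d = vzero R.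
Proof.
move=> dE du dv; apply: dot_eq0.
have -> : dot d d = a * dot d u + b * dot d v by rewrite {2}dE; vec_unfold; ring.
by rewrite du dv !mulr0 addr0.
Qed.

Lemma normals_sqr_dot {u v y z} : cross u v <> vzero R ->
  dot y u = 0 -> dot y v = 0 -> dot z u = 0 -> dot z v = 0 ->
  dot y z ^+ 2 = dot y y * dot z z.
Proof.
rewrite !(dotC _ u) !(dotC _ v) => W0 uy vy uz vz; set W := cross u v.
have Wy := dot_parallel y (cross_perp uy vy).
have Wz := dot_parallel z (cross_perp uz vz).
have Wyz := dot_parallel z (cross_perp uy vy).
have W2_neq0 : dot W W ^+ 2 != 0 by rewrite expf_neq0 // gt_eqF ?dot_gt0.
apply: (mulfI W2_neq0).
transitivity ((dot W W * dot y z) ^+ 2); first by ring.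
transitivity ((dot W W * dot y y) * (dot W W * dot z z)); last by ring.
by rewrite Wyz Wy Wz; ring.
Qed.

Lemma parallel_equal_norm_half y t : t <> vzero R ->
  dot y t ^+ 2 = dot y y * dot t t -> dot (vadd y t) (vadd y t) = dot y y ->
  y = vscale (- (1 / 2)) t.
Proof.
move=> t0 par same; have tt_gt0 := dot_gt0 t0.
have yt : dot y t = - (dot t t / 2).
  have : dot (vadd y t) (vadd y t) = dot y y + 2 * dot y t + dot t t by vec_unfold; ring.
  lra.
have yy : dot y y = dot t t / 4.
  by apply: (mulIf (lt0r_neq0 tt_gt0)); rewrite -par yt; field.
apply/vsub_eq0/dot_eq0.
have -> : dot (vsub y (vscale (- (1 / 2)) t)) (vsub y (vscale (- (1 / 2)) t))
          = dot y y + dot y t + dot t t / 4 by vec_unfold; field.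
by rewrite yy yt; field.
Qed.

Lemma par_face_tangent_dist V e t p r :
  t <> vzero R -> dot t e = 0 -> dot t (vsub p V) = 0 ->
  par_face_tangent V e t (vadd p (vscale (1 / 2) t)) r ->
  r ^+ 2 * dot e e = dot (cross e (vsub p V)) (cross e (vsub p V)).
Proof.
move=> t0 te tp [s [w [_ _]]] /=.
set d := vsub (vadd V _) _ => -[dr de dt].
have w_half : w = 1 / 2.
  have : dot d t = (w - 1 / 2) * dot t t - dot t (vsub p V) + s * dot t e.
    by rewrite /d; vec_unfold; ring.
  rewrite dt tp te subr0 mulr0 addr0 => /esym/eqP.
  by rewrite mulf_eq0 (gt_eqF (dot_gt0 t0)) orbF subr_eq0 => /eqP.
have -> : vsub p V = vsub (vscale s e) d by rewrite /d w_half; vec_ring.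
have -> : dot (cross e (vsub (vscale s e) d)) (cross e (vsub (vscale s e) d))
          = dot (cross e d) (cross e d) by vec_unfold; ring.
by rewrite dot_cross_cross (dotC e d) de -(sqr_vnorm d) dr; ring.
Qed.

End PlaneNormals.

Section Prism.
Context {R : rcfType}.
Variables A B C t : vec R.
Hypotheses (prism : is_right_prism A B C t) (equi : equilateral A B C).

Let u := vsub B A.
Let v := vsub C A.

Lemma equilateral_dot :
  [/\ dot v v = dot u u, dot u v = dot u u / 2,
      dot (vsub C B) (vsub C B) = dot u u & dot (vsub A C) (vsub A C) = dot u u].
Proof.
case: equi => e1 e2.
have sq (X Y : vec R) : vnorm X = vnorm Y -> dot X X = dot Y Y.
  by move=> e; rewrite -(sqr_vnorm X) -(sqr_vnorm Y) e.
have CB : dot (vsub C B) (vsub C B) = dot v v - 2 * dot u v + dot u u.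
  by rewrite /u /v; vec_unfold; ring.
have AC : dot (vsub A C) (vsub A C) = dot v v by rewrite /v; vec_unfold; ring.
move: (sq _ _ e1) (sq _ _ e2); rewrite CB AC -/u => s1 s2.
by split; lra.
Qed.

Lemma base_normal_sqr : dot (cross u v) (cross u v) = 3 / 4 * dot u u ^+ 2.
Proof.
case: equilateral_dot => vv uv _ _.
by rewrite dot_cross_cross vv (dotC v u) uv; field.
Qed.

Lemma insphere_center {c r} :
  tri_face_tangent A B C c r -> tri_face_tangent (vadd A t) (vadd B t) (vadd C t) c r ->
  exists a b g : R, [/\ [/\ 0 <= a, 0 <= b & 0 <= g], a + b + g = 1,
    c = vadd (vadd (vscale a A) (vadd (vscale b B) (vscale g C))) (vscale (1 / 2) t)
    & 4 * r ^+ 2 = dot t t].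
Proof.
case: prism => W0 t0 tu tv.
move=> [a [b [g [a0 b0 g0 abg /= [yr yu yv]]]]].
move=> [a' [b' [g' [_ _ _ abg' /= [zr zu zv]]]]].
rewrite !vsub_translate in zu zv.
set p := vadd (vscale a A) _ in yr yu yv *.
set y := vsub p c in yr yu yv.
set z := vsub _ c in zr zu zv.
have zE : z = vadd y t.
  apply/vsub_eq0; apply: (span_perp_eq0 u v _ (b' - b) (g' - g)).
  - rewrite /z /y /p /u /v.
    have -> : a = 1 - b - g by lra.
    have -> : a' = 1 - b' - g' by lra.
    vec_ring.
  - by move: zu yu tu; rewrite -/u; vec_unfold; lra.
  - by move: zv yv tv; rewrite -/v; vec_unfold; lra.
have yE : y = vscale (- (1 / 2)) t.
  apply: parallel_equal_norm_half => //.
    exact: (normals_sqr_dot W0 yu yv tu tv).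
  by rewrite -zE -(sqr_vnorm z) -(sqr_vnorm y) zr yr.
exists a, b, g; split => //.
  apply/vsub_eq0.
  have -> : vsub c (vadd p (vscale (1 / 2) t)) = vsub (vscale (- (1 / 2)) t) y.
    by rewrite /y; vec_ring.
  by rewrite yE; vec_ring.
by rewrite -yr sqr_vnorm yE; vec_unfold; field.
Qed.

(* The foot [p] of the centre is at distance [r] from the three side lines; these
   distances are proportional to the barycentric coordinates of [p]. *)
Lemma prism_insphere_height : prism_circumscribed A B C t -> 3 * dot t t = dot u u.
Proof.
case: prism; rewrite -/u -/v => W0 t0 tu tv; case: equilateral_dot => vv uv CB AC.
move=> [c [r [_ [T1 T2 F1 F2 F3]]]].
have [a [b [g [[a0 b0 g0] abg cE rt]]]] := insphere_center T1 T2.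
set p := vadd (vscale a A) _ in cE; rewrite cE in F1 F2 F3.
have pA : vsub p A = vadd (vscale b u) (vscale g v).
  by rewrite /p /u /v (_ : a = 1 - b - g); [vec_ring | lra].
have face V e k : dot t e = 0 -> dot t (vsub V A) = 0 -> dot e e = dot u u ->
    cross e (vsub p V) = vscale k (cross u v) ->
    par_face_tangent V e t (vadd p (vscale (1 / 2) t)) r ->
    r ^+ 2 * dot u u = k ^+ 2 * dot (cross u v) (cross u v).
  move=> te tV ee eW /par_face_tangent_dist; rewrite ee eW => -> //.
  - by vec_unfold; ring.
  - have -> : dot t (vsub p V) = dot t (vsub p A) - dot t (vsub V A) by vec_unfold; ring.
    have -> : dot t (vsub p A) = b * dot t u + g * dot t v by rewrite pA; vec_unfold; ring.
    by rewrite tu tv tV; ring.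
have Q_gt0 : 0 < dot (cross u v) (cross u v) := dot_gt0 W0.
have x_gt0 : 0 < dot u u.
  rewrite lt_def dot_ge0 andbT; apply/eqP => x0.
  by move: Q_gt0; rewrite base_normal_sqr x0 expr0n mulr0 ltxx.
have aE : a = 1 - b - g by lra.
have F1' := face A u g tu _ erefl _ F1.
have F2' := face B (vsub C B) a _ tu CB _ F2.
have F3' := face C (vsub A C) b _ tv AC _ F3.
have {}F1' : r ^+ 2 * dot u u = g ^+ 2 * dot (cross u v) (cross u v).
  apply: F1'; first by vec_unfold; ring.
  by rewrite /p aE /u /v; vec_ring.
have {}F2' : r ^+ 2 * dot u u = a ^+ 2 * dot (cross u v) (cross u v).
  apply: F2'; first by move: tu tv; rewrite /u /v; vec_unfold; lra.
  by rewrite /p aE /u /v; vec_ring.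
have {}F3' : r ^+ 2 * dot u u = b ^+ 2 * dot (cross u v) (cross u v).
  apply: F3'; first by move: tv; rewrite /v; vec_unfold; lra.
  by rewrite /p aE /u /v; vec_ring.
have same_sqr (k l : R) : 0 <= k -> 0 <= l ->
    k ^+ 2 * dot (cross u v) (cross u v) = l ^+ 2 * dot (cross u v) (cross u v) -> k = l.
  move=> k0 l0 /(mulIf (lt0r_neq0 Q_gt0))/eqP.
  by rewrite (eqrXn2 (isT : (0 < 2)%N) k0 l0) => /eqP.
have ga : g = a by apply: same_sqr; rewrite // -F1' F2'.
have ba : b = a by apply: same_sqr; rewrite // -F3' F2'.
have a13 : a = 1 / 3 by lra.
apply: (mulIf (lt0r_neq0 x_gt0)); rewrite -rt.
transitivity (12 * (r ^+ 2 * dot u u)); first by ring.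
by rewrite F2' a13 base_normal_sqr; field.
Qed.

Lemma prism_surface_cube_lt :
  prism_circumscribed A B C t -> prism_volume A B C t = 1 -> prism_surface A B C t ^+ 3 < 288.
Proof.
move=> /prism_insphere_height height.
case: prism; rewrite -/u -/v => _ _ tu tv; case: equilateral_dot => _ _ CB AC.
have side e : dot e e = dot u u -> dot t e = 0 -> par_area e t = par_area u t.
  by move=> ee te; rewrite /par_area /vnorm !dot_cross_cross ee (dotC e t) te (dotC u t) tu.
have tCB : dot t (vsub C B) = 0 by move: tu tv; rewrite /u /v; vec_unfold; lra.
have tAC : dot t (vsub A C) = 0 by move: tv; rewrite /v; vec_unfold; lra.
rewrite /prism_volume /prism_surface /tri_area !vsub_translate -/u -/v.
rewrite (side _ CB tCB) (side _ AC tAC) => vol.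
apply: (equilateral_prism_cube_lt _ _ (vnorm t) (dot u u)) => //.
- by rewrite divr_ge0 ?vnorm_ge0.
- exact: vnorm_ge0.
- exact: vnorm_ge0.
- by rewrite expr_div_n sqr_vnorm base_normal_sqr; field.
- by rewrite /par_area sqr_vnorm dot_cross_cross (dotC u t) tu -height; field.
- by rewrite sqr_vnorm -height; field.
Qed.

End Prism.

Theorem proposition5p7 (R : rcfType) (A B C t Q1 Q2 Q3 Q4 E : vec R) :
  is_right_prism A B C t -> equilateral A B C -> prism_circumscribed A B C t ->
  prism_volume A B C t = 1 ->
  is_quad_pyramid Q1 Q2 Q3 Q4 E -> pyramid_volume Q1 Q2 Q3 Q4 E = 1 ->
  prism_surface A B C t < pyramid_surface Q1 Q2 Q3 Q4 E.
Proof.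
move=> prism equi circ volP pyr volQ.
have prism_ge0 : 0 <= prism_surface A B C t.
  by rewrite /prism_surface !addr_ge0 ?tri_area_ge0 ?vnorm_ge0.
have pyramid_ge0 : 0 <= pyramid_surface Q1 Q2 Q3 Q4 E.
  by rewrite /pyramid_surface !addr_ge0 ?tri_area_ge0.
rewrite -(ltr_pXn2r (isT : (0 < 3)%N)) ?nnegrE //.
exact: lt_le_trans (prism_surface_cube_lt _ _ _ _ prism equi circ volP)
                   (pyramid_surface_cube_ge _ _ _ _ _ pyr volQ).
Qed.
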